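(* Let $\xi:[0,\ell)\to\mathbb{R}^n$ be a self-contracted curve. Then for every $\tau\in[0,\ell)$ and all $t_1,t_2\in(\tau,\ell)$ with $\xi(t_1)\neq\xi(\tau)$ and $\xi(t_2)\neq\xi(\tau)$, $$\angle\big(\xi(t_1)-\xi(\tau),\,\xi(t_2)-\xi(\tau)\big)<\frac{\pi}{2},$$ where $\angle(v,w)\in[0,\pi]$ denotes the Euclidean angle between nonzero vectors $v,w$.
   Context: Let $(X,d)$ be a metric space and $\ell\in(0,\infty]$. A map $\xi:[0,\ell)\to X$ (not necessarily continuous) is called self-contracted if $d(\xi(t_2),\xi(t_3))\le d(\xi(t_1),\xi(t_3))$ for all $0\le t_1\le t_2\le t_3<\ell$. Here $X=\mathbb{R}^n$ with the Euclidean distance. *)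

From Stdlib Require Import Reals Lra.
From Stdlib Require Fin.
Open Scope R_scope.

Definition Rn (n : nat) : Type := Fin.t n -> R.

Fixpoint sum_fin (n : nat) : (Fin.t n -> R) -> R :=
  match n return (Fin.t n -> R) -> R with
  | O => fun _ => 0
  | S m => fun f => f Fin.F1 + sum_fin m (fun i => f (Fin.FS i))
  end.

Definition vsub {n : nat} (x y : Rn n) : Rn n := fun i => x i - y i.
Definition dot {n : nat} (x y : Rn n) : R := sum_fin n (fun i => x i * y i).
Definition norm {n : nat} (x : Rn n) : R := sqrt (dot x x).
Definition dist {n : nat} (x y : Rn n) : R := norm (vsub x y).

Definition angle {n : nat} (v w : Rn n) : R := acos (dot v w / (norm v * norm w)).

(* The length parameter ell in (0, +infty]: None encodes +infty. *)
Definition ext_pos (ell : option R) : Prop :=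
  match ell with Some l => 0 < l | None => True end.

Definition lt_ell (t : R) (ell : option R) : Prop :=
  match ell with Some l => t < l | None => True end.

Definition in_dom (ell : option R) (t : R) : Prop := 0 <= t /\ lt_ell t ell.

(* self-contracted map xi : [0,ell) -> R^n (only values on [0,ell) matter) *)
Definition self_contracted {n : nat} (ell : option R) (xi : R -> Rn n) : Prop :=
  forall t1 t2 t3, in_dom ell t1 -> in_dom ell t3 -> t1 <= t2 -> t2 <= t3 ->
    dist (xi t2) (xi t3) <= dist (xi t1) (xi t3).

(* For tau <= t1 <= t2, self-contraction gives |x2 - x1| <= |x2 - x0| with x_i = xi(t_i),
   x0 = xi(tau).  Expanding x2 - x1 = (x2 - x0) - (x1 - x0) turns this into
   2 <x1 - x0, x2 - x0> >= |x1 - x0|^2 > 0, so the cosine of the angle is positive. *)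
From Pilot Require Import Defs.
From Stdlib Require Import Reals Lra FunctionalExtensionality Classical.
Open Scope R_scope.

Lemma sum_fin_ext n (f g : Fin.t n -> R) :
  (forall i, f i = g i) -> sum_fin n f = sum_fin n g.
Proof.
  induction n as [|n IH]; simpl; intros E; [reflexivity|].
  rewrite E; f_equal; apply IH; intros; apply E.
Qed.

Lemma sum_fin_lincomb n (f g h : Fin.t n -> R) a b :
  (forall i, f i = a * g i + b * h i) ->
  sum_fin n f = a * sum_fin n g + b * sum_fin n h.
Proof.
  revert f g h; induction n as [|n IH]; simpl; intros f g h E; [ring|].
  rewrite E, (IH (fun i => f (Fin.FS i)) (fun i => g (Fin.FS i)) (fun i => h (Fin.FS i))).
  - ring.
  - intros; apply E.
Qed.

Lemma sum_fin_nonneg n (f : Fin.t n -> R) :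
  (forall i, 0 <= f i) -> 0 <= sum_fin n f.
Proof.
  induction n as [|n IH]; simpl; intros H; [lra|].
  specialize (IH (fun i => f (Fin.FS i)) (fun i => H _)).
  specialize (H Fin.F1); lra.
Qed.

Lemma sum_fin_pos n (f : Fin.t n -> R) :
  (forall i, 0 <= f i) -> (exists i, 0 < f i) -> 0 < sum_fin n f.
Proof.
  induction n as [|n IH]; intros H [i Hi]; [inversion i|].
  simpl.
  assert (H1 := H Fin.F1).
  assert (Hrest := sum_fin_nonneg n (fun j => f (Fin.FS j)) (fun j => H _)).
  revert Hi; pattern i; apply Fin.caseS'; [intros; lra | intros j Hj].
  enough (0 < sum_fin n (fun j => f (Fin.FS j))) by lra.
  apply IH; [intros; apply H | exists j; exact Hj].
Qed.

Lemma dot_comm n (u v : Rn n) : dot u v = dot v u.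
Proof. unfold dot; apply sum_fin_ext; intros; ring. Qed.

Lemma dot_self_nonneg n (v : Rn n) : 0 <= dot v v.
Proof. apply sum_fin_nonneg; intros; apply Rle_0_sqr. Qed.

Lemma dot_vsub_self n (u v : Rn n) :
  dot (vsub u v) (vsub u v) = dot u u - 2 * dot u v + dot v v.
Proof.
  unfold dot, vsub.
  rewrite (sum_fin_lincomb _ _ (fun i => u i * u i) (fun i => v i * v i - 2 * (u i * v i)) 1 1)
    by (intros; ring).
  rewrite (sum_fin_lincomb _ (fun i => v i * v i - 2 * (u i * v i))
             (fun i => v i * v i) (fun i => u i * v i) 1 (-2))
    by (intros; ring).
  ring.
Qed.

Lemma dot_vsub_self_pos n (x y : Rn n) : x <> y -> 0 < dot (vsub x y) (vsub x y).
Proof.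
  intros Hxy; apply sum_fin_pos; [intros; apply Rle_0_sqr|].
  apply NNPP; intros Hall; apply Hxy, functional_extensionality; intros i.
  destruct (Req_dec (x i) (y i)) as [E|E]; [exact E|].
  exfalso; apply Hall; exists i; unfold vsub.
  apply Rsqr_pos_lt; lra.
Qed.

Lemma norm_vsub_pos n (x y : Rn n) : x <> y -> 0 < norm (vsub x y).
Proof. intros; apply sqrt_lt_R0, dot_vsub_self_pos; assumption. Qed.

Lemma dist_comm n (x y : Rn n) : Defs.dist x y = Defs.dist y x.
Proof. unfold Defs.dist, norm, dot, vsub; f_equal; apply sum_fin_ext; intros; ring. Qed.

Lemma dot_pos_of_dist_le n (x0 x1 x2 : Rn n) :
  x1 <> x0 -> Defs.dist x2 x1 <= Defs.dist x2 x0 -> 0 < dot (vsub x1 x0) (vsub x2 x0).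
Proof.
  intros Hx10 Hdist; unfold Defs.dist, norm in Hdist.
  apply sqrt_le_0 in Hdist; try apply dot_self_nonneg.
  assert (Hsplit : vsub x2 x1 = vsub (vsub x2 x0) (vsub x1 x0))
    by (apply functional_extensionality; intros; unfold vsub; ring).
  rewrite Hsplit, dot_vsub_self in Hdist.
  rewrite dot_comm; assert (Hpos := dot_vsub_self_pos _ _ _ Hx10); lra.
Qed.

Lemma acos_lt_PI2 x : 0 < x -> acos x < PI / 2.
Proof. intros Hx; rewrite acos_atan by exact Hx; apply atan_bound. Qed.

Lemma angle_lt_PI2 n (v w : Rn n) :
  0 < norm v -> 0 < norm w -> 0 < dot v w -> angle v w < PI / 2.
Proof.
  intros Hv Hw Hvw; apply acos_lt_PI2, Rdiv_lt_0_compat; [exact Hvw|].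
  apply Rmult_lt_0_compat; assumption.
Qed.

Lemma self_contracted_dot_pos n ell (xi : R -> Rn n) tau t1 t2 :
  self_contracted ell xi -> in_dom ell tau -> tau <= t1 -> t1 <= t2 ->
  lt_ell t2 ell -> xi t1 <> xi tau ->
  0 < dot (vsub (xi t1) (xi tau)) (vsub (xi t2) (xi tau)).
Proof.
  intros Hsc Htau H01 H12 Hl2 Hne.
  apply dot_pos_of_dist_le; [exact Hne|].
  rewrite (dist_comm _ (xi t2)), (dist_comm _ (xi t2)).
  apply Hsc; [exact Htau | split; [destruct Htau; lra | exact Hl2] | exact H01 | exact H12].
Qed.

Theorem mainTheorem2 (n : nat) (ell : option R) (xi : R -> Rn n) :
  ext_pos ell -> self_contracted ell xi ->
  forall tau t1 t2,
    in_dom ell tau ->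
    tau < t1 -> lt_ell t1 ell ->
    tau < t2 -> lt_ell t2 ell ->
    xi t1 <> xi tau -> xi t2 <> xi tau ->
    angle (vsub (xi t1) (xi tau)) (vsub (xi t2) (xi tau)) < PI / 2.
Proof.
  intros _ Hsc tau t1 t2 Htau Ht1 Hl1 Ht2 Hl2 Hne1 Hne2.
  apply angle_lt_PI2; try apply norm_vsub_pos; try assumption.
  destruct (Rle_dec t1 t2) as [H12|H21].
  - apply (self_contracted_dot_pos _ ell); auto; lra.
  - rewrite dot_comm; apply (self_contracted_dot_pos _ ell); auto; lra.
Qed.
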